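(* Fix $0<R<1$, $\varepsilon>0$ with $1-R-\varepsilon>0$, a positive integer $\ell$, and let $q$ be a prime power with $q\ge \max\left(\ell^{\frac{8R}{\varepsilon}+6},\ \ell\cdot 2^{4/\varepsilon}\right)$. Let $L:=2\ell/\varepsilon$ and let $\mathcal{C}\subseteq \mathbb{F}_q^n$ be a random linear code of rate $R$. Then with probability at least $1-q^{-\varepsilon n L/8}$, for every choice of input lists $S_1,\dots,S_n\subseteq\mathbb{F}_q$ each of size $\ell$, every linearly independent subset of $\mathcal{C}\cap B(1-R-\varepsilon, S_1\times\cdots\times S_n)$ has size less than $2\ell/\varepsilon$.
   Context: A random linear code of rate $R$ in $\mathbb{F}_q^n$ is the column span of a generator matrix $\mathbf{G}\in\mathbb{F}_q^{n\times Rn}$ whose entries are independent and uniformly random elements of $\mathbb{F}_q$ (here $Rn$ is an integer). For sets $S_1,\dots,S_n\subseteq\mathbb{F}_q$ of size $\ell$ and $\rho\in(0,1)$, the $\rho$-radius $\ell$-list-recovery ball $B(\rho,S_1\times\cdots\times S_n)$ is the set of $x\in\mathbb{F}_q^n$ such that $|\{i\in[n]: x[i]\in S_i\}|\ge(1-\rho)n$. *)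

From HB Require Import structures.
From mathcomp Require Import all_boot all_order all_algebra.
From mathcomp Require Import reals exp.
Set Implicit Arguments. Unset Strict Implicit. Unset Printing Implicit Defensive.
Import Order.TTheory GRing.Theory Num.Theory.
Local Open Scope ring_scope.

Definition lin_code (F : finFieldType) (n k : nat) (G : 'M[F]_(n, k)) : {set 'cV[F]_n} :=
  [set x : 'cV[F]_n | [exists m : 'cV[F]_k, x == G *m m]].

Definition lr_ball (RR : realType) (F : finFieldType) (n : nat) (rho : RR)
  (S : 'I_n -> {set F}) : {set 'cV[F]_n} :=
  [set x : 'cV[F]_n | (1 - rho) * n%:R <= #|[set i : 'I_n | x i ord0 \in S i]|%:R].

Definition good_code (RR : realType) (F : finFieldType) (n k l : nat) (rho bound : RR)
  (G : 'M[F]_(n, k)) : bool :=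
  [forall S : {ffun 'I_n -> {set F}},
    [forall i : 'I_n, #|S i| == l] ==>
    [forall T : {set 'cV[F]_n},
      (T \subset lin_code G :&: lr_ball rho S) ==> free (enum T) ==>
      (#|T|%:R < bound)]].

From HB Require Import structures.
From mathcomp Require Import all_boot all_order all_algebra.
From mathcomp Require Import reals exp.
From mathcomp Require Import ring lra.
Import Order.TTheory GRing.Theory Num.Theory.
Local Open Scope ring_scope.
Set Implicit Arguments. Unset Strict Implicit. Unset Printing Implicit Defensive.

(* If a code generated by G is bad, some ball B(1 - R - eps, S) contains
   m = ceil L linearly independent codewords G d_1, ..., G d_m, and then the
   messages d_j, i.e. the rows of an m x k matrix D, are independent too.  For
   fixed S and D of full row rank, G |-> D G^T is a surjective linear map onto
   the m x n matrices, so the fraction of G putting all m codewords into the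
   ball is (|B| / q^n)^m, where |B| <= 2^n (l/q)^((R + eps) n) q^n.  A union
   bound over the at most q^(l n) lists S and q^(k m) matrices D, followed by
   a comparison of logarithms, bounds the fraction of bad codes by
   q^(- eps n L / 8). *)

Lemma leq_card_bigcup (I T : finType) (P : {pred I}) (F : I -> {set T}) :
  (#|\bigcup_(i in P) F i| <= \sum_(i in P) #|F i|)%N.
Proof.
elim/big_rec2: _ => [|i U s _ IH]; first by rewrite cards0.
by rewrite (leq_trans (leq_card_setU _ _).1) ?leq_add2l.
Qed.

Lemma bin_leq_exp n l : ('C(n, l) <= n ^ l)%N.
Proof.
rewrite (leq_trans (leq_pmulr _ (fact_gt0 l))) // bin_ffact ffact_prod.
rewrite -[X in (_ <= _ ^ X)%N]card_ord -prod_nat_const.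
by apply: leq_prod => i _; rewrite leq_subr.
Qed.

Section SurjectiveAdditive.
Variables (V W : finZmodType) (f : V -> W).
Hypotheses (fB : {morph f : x y / x - y}) (f_surj : forall w, exists v, f v = w).

Lemma card_fiber_surj (w : W) : #|f @^-1: pred1 w| = #|f @^-1: pred1 0|.
Proof.
have [v fv] := f_surj w.
have -> : f @^-1: pred1 w = (fun x => x - v) @^-1: (f @^-1: pred1 0).
  by apply/setP => x; rewrite !inE fB fv subr_eq0.
exact/card_preimset/addIr.
Qed.

Lemma card_preimset_surj (X : {pred W}) : (#|f @^-1: X| * #|W| = #|X| * #|V|)%N.
Proof.
have card_preim_ker (Y : {pred W}) : #|f @^-1: Y| = (#|Y| * #|f @^-1: pred1 0%R|)%N.
  rewrite -sum1_card (partition_big f (mem Y)) => [|x]; last by rewrite inE.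
  rewrite -sum_nat_const; apply: eq_bigr => w Yw.
  rewrite -(card_fiber_surj w) -sum1_card; apply: eq_bigl => x.
  by rewrite !inE; case: eqP => [->|]; rewrite ?andbT ?andbF.
have card_V : #|V| = (#|W| * #|f @^-1: pred1 0%R|)%N.
  by rewrite -card_preim_ker; apply: eq_card => x; rewrite !inE.
by rewrite card_preim_ker card_V mulnAC mulnA.
Qed.

End SurjectiveAdditive.

Section RowFree.
Variable F : fieldType.

Lemma row_free_mulmxl m n p (A : 'M[F]_(m, n)) (B : 'M_(n, p)) :
  row_free (A *m B) -> row_free A.
Proof.
rewrite /row_free => /eqP rkAB; rewrite eqn_leq rank_leq_row /=.
by rewrite -[X in (X <= _)%N]rkAB mxrankM_maxl.
Qed.

Lemma mulmx_trmx_surj m n k (D : 'M[F]_(m, k)) :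
  row_free D -> forall Y : 'M_(m, n), exists G : 'M_(n, k), D *m G^T = Y.
Proof.
by case/row_freeP => B DB Y; exists (B *m Y)^T; rewrite trmxK mulmxA DB mul1mx.
Qed.

Lemma free_row_free_trmx m n (t : m.-tuple 'cV[F]_n) :
  free t -> row_free (\matrix_(j < m) (t`_j)^T).
Proof.
move=> /freeP free_t; rewrite -kermx_eq0; apply/rowV0P => v /sub_kermxP vt0.
apply/rowP => j; rewrite mxE; apply: (free_t (fun j => v 0 j)) => //.
apply: trmx_inj; rewrite trmx0 -vt0 mulmx_sum_row raddf_sum /=.
by apply: eq_bigr => i _; rewrite linearZ /= rowK.
Qed.

Lemma codewords_mulmx n k m (G : 'M[F]_(n, k)) (t : m.-tuple 'cV[F]_n) :
  (forall j : 'I_m, exists w, t`_j = G *m w) ->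
  exists D : 'M_(m, k), D *m G^T = \matrix_(j < m) (t`_j)^T.
Proof.
move=> t_code.
suff /submxP [D ->] : (\matrix_(j < m) (t`_j)^T <= G^T)%MS by exists D.
apply/row_subP => j; rewrite rowK; have [w ->] := t_code j.
by rewrite trmx_mul submxMl.
Qed.

End RowFree.

Section Counting.
Variable F : finFieldType.

Lemma card_cV_agree n (S : 'I_n -> {set F}) (A : {set 'I_n}) :
  #|[set x : 'cV[F]_n | [forall i in A, x i 0 \in S i]]|
    = (\prod_(i in A) #|S i| * #|F| ^ #|~: A|)%N.
Proof.
pose Fam i := if i \in A then S i else [set: F].
pose c (x : 'cV[F]_n) := [ffun i => x i 0].
have c_bij : bijective c.
  exists (fun f : {ffun 'I_n -> F} => \col_i f i) => [x | f].
    by apply/matrixP => i j; rewrite mxE ffunE ord1.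
  by apply/ffunP => i; rewrite !ffunE mxE.
rewrite (_ : [set x | _] = c @^-1: family Fam); last first.
  apply/setP => x; rewrite !inE; apply/forall_inP/familyP => /= x_in i.
    by rewrite ffunE /Fam; case: ifP => [/x_in | _]; rewrite ?inE.
  by move=> iA; have := x_in i; rewrite ffunE /Fam iA.
rewrite on_card_preimset; last exact: onW_bij.
rewrite card_family foldrE big_image /= (bigID (mem A)) /=.
congr (_ * _)%N; first by apply: eq_bigr => i iA; rewrite /Fam iA.
rewrite (eq_bigr (fun=> #|F|)) => [|i iA]; last by rewrite /Fam (negbTE iA) cardsT.
by rewrite -prod_nat_const; apply: eq_bigl => i; rewrite !inE.
Qed.

Lemma card_rows_in m n (B : {set 'cV[F]_n}) :
  #|[set Y : 'M[F]_(m, n) | [forall j, (row j Y)^T \in B]]| = (#|B| ^ m)%N.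
Proof.
pose c (Y : 'M[F]_(m, n)) := [ffun j => (row j Y)^T].
have c_bij : bijective c.
  exists (fun f : {ffun 'I_m -> 'cV[F]_n} => \matrix_j (f j)^T) => [Y | f].
    by apply/row_matrixP => j; rewrite rowK ffunE trmxK.
  by apply/ffunP => j; rewrite !ffunE rowK trmxK.
rewrite (_ : [set Y | _] = c @^-1: ffun_on B); last first.
  apply/setP => Y; rewrite !inE.
  by apply/forallP/ffun_onP => Y_in j; have := Y_in j; rewrite ffunE.
by rewrite on_card_preimset ?card_ffun_on ?card_ord //; exact: onW_bij.
Qed.

Lemma card_lr_ball_le (RR : realType) n l (rho : RR) (S : 'I_n -> {set F}) :
  (forall i, #|S i| = l) -> (0 < l)%N -> (l <= #|F|)%N ->
  #|lr_ball rho S|%:R <=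
    2 ^+ n * ((l%:R / #|F|%:R) `^ ((1 - rho) * n%:R) * #|F|%:R ^+ n).
Proof.
move=> card_S l_gt0 l_le_q; set Q : RR := #|F|%:R.
have q_gt0 : (0 < #|F|)%N := leq_trans l_gt0 l_le_q.
have Q_gt0 : 0 < Q by rewrite ltr0n.
pose agree (A : {set 'I_n}) := [set x : 'cV[F]_n | [forall i in A, x i 0 \in S i]].
pose large := [set A : {set 'I_n} | (1 - rho) * n%:R <= #|A|%:R].
have ball_sub : lr_ball rho S \subset \bigcup_(A in large) agree A.
  apply/subsetP => x; rewrite inE => x_in; apply/bigcupP.
  exists [set i | x i 0 \in S i]; rewrite !inE //.
  by apply/forall_inP => i; rewrite inE.
have card_agree A : A \in large ->
    (#|agree A|%:R : RR) <= (l%:R / Q) `^ ((1 - rho) * n%:R) * Q ^+ n.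
  rewrite inE => A_large.
  rewrite card_cV_agree (eq_bigr (fun=> l)) // prod_nat_const natrM !natrX.
  have -> : l%:R ^+ #|A| * Q ^+ #|~: A| = (l%:R / Q) ^+ #|A| * Q ^+ n.
    have n_split : (#|A| + #|~: A|)%N = n by rewrite cardsC card_ord.
    by rewrite -[X in _ = _ * Q ^+ X]n_split exprD mulrA -exprMn divfK ?gt_eqF.
  apply: ler_wpM2r; first by rewrite exprn_ge0 ?ltW.
  rewrite -powR_mulrn; last by rewrite divr_ge0 // ltW.
  apply: (ger_powR _ A_large).
  by rewrite divr_gt0 ?ltr0n //= ler_pdivrMr // mul1r ler_nat.
have card_large : (#|large| <= 2 ^ n)%N.
  rewrite -[X in (_ <= 2 ^ X)%N](card_ord n) -cardsT -card_powerset.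
  by rewrite powersetT cardsT max_card.
apply: (@le_trans _ _ ((\sum_(A in large) #|agree A|)%N%:R : RR)).
  by rewrite ler_nat (leq_trans (subset_leq_card ball_sub)) ?leq_card_bigcup.
rewrite natr_sum; apply: le_trans (ler_sum _ card_agree) _.
rewrite sumr_const -[X in X <= _]mulr_natl.
apply: ler_wpM2r; last by rewrite -natrX ler_nat.
by rewrite mulr_ge0 ?powR_ge0 // exprn_ge0 // ltW.
Qed.

End Counting.

Section BadCodes.
Variables (RR : realType) (F : finFieldType) (n k l m : nat) (rho L : RR).
Hypothesis m_min : forall t : nat, L <= t%:R -> (m <= t)%N.

Definition input_lists : {set {ffun 'I_n -> {set F}}} :=
  [set S : {ffun 'I_n -> {set F}} | [forall i, #|S i| == l]].

Definition rows_in_ball (S : {ffun 'I_n -> {set F}}) : {set 'M[F]_(m, n)} :=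
  [set Y | [forall j, (row j Y)^T \in lr_ball rho S]].

Lemma bad_code_witness (G : 'M[F]_(n, k)) :
  ~~ good_code l rho L G ->
  exists2 S, S \in input_lists &
    exists2 D : 'M[F]_(m, k), row_free D & D *m G^T \in rows_in_ball S.
Proof.
rewrite negb_forall => /existsP [S]; rewrite negb_imply => /andP [S_in].
rewrite negb_forall => /existsP [T]; rewrite !negb_imply -leNgt.
move=> /and3P [/subsetP T_sub free_T /m_min m_le_T].
have size_t : size (take m (enum T)) == m by rewrite size_takel // -cardE.
pose t : m.-tuple 'cV[F]_n := Tuple size_t.
have t_in (j : 'I_m) : t`_j \in T.
  by rewrite -mem_enum; apply/mem_take/mem_nth; rewrite size_tuple.
have free_t : free t.
  by apply: (@catl_free _ _ (drop m (enum T))); rewrite cat_take_drop.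
have [D DG] : exists D : 'M_(m, k), D *m G^T = \matrix_(j < m) (t`_j)^T.
  apply: codewords_mulmx => j; have := T_sub _ (t_in j).
  by rewrite !inE => /andP [/existsP [w /eqP ->] _]; exists w.
exists S; first by rewrite inE.
exists D; first by apply: (@row_free_mulmxl _ _ _ _ _ G^T); rewrite DG free_row_free_trmx.
rewrite inE DG; apply/forallP => j; rewrite rowK trmxK.
by have := T_sub _ (t_in j); rewrite inE => /andP [].
Qed.

Lemma card_bad_codes_union_bound (B : RR) :
  0 <= B -> (forall S, S \in input_lists -> #|lr_ball rho S|%:R <= B) ->
  #|[set G : 'M[F]_(n, k) | ~~ good_code l rho L G]|%:R * #|F|%:R ^+ (m * n)
    <= #|F|%:R ^+ (l * n) * #|F|%:R ^+ (m * k) * B ^+ m * #|F|%:R ^+ (n * k).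
Proof.
move=> B_ge0 ball_le.
pose choices := setX input_lists [set D : 'M[F]_(m, k) | row_free D].
pose bad_for (p : {ffun 'I_n -> {set F}} * 'M[F]_(m, k)) :=
  [set G : 'M[F]_(n, k) | p.2 *m G^T \in rows_in_ball p.1].
have bad_sub :
    [set G | ~~ good_code l rho L G] \subset \bigcup_(p in choices) bad_for p.
  apply/subsetP => G; rewrite inE => /bad_code_witness [S S_in [D D_free DG]].
  by apply/bigcupP; exists (S, D); rewrite ?in_setX ?S_in inE.
have card_bad_for p : p \in choices ->
    #|bad_for p|%:R * #|F|%:R ^+ (m * n) <= B ^+ m * (#|F|%:R : RR) ^+ (n * k).
  case: p => S D; rewrite !inE /= => /andP [S_in D_free].
  have fB : {morph (fun G : 'M[F]_(n, k) => D *m G^T) : G H / G - H}.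
    by move=> G H; rewrite /= linearB /= mulmxBr.
  have := card_preimset_surj fB (mulmx_trmx_surj D_free) (rows_in_ball S).
  rewrite card_rows_in !card_mx => card_eq.
  rewrite -natrX -natrM [X in X%:R]card_eq natrM !natrX.
  apply: ler_wpM2r; first by rewrite exprn_ge0.
  by rewrite lerXn2r ?nnegrE // ball_le // inE.
have card_choices :
    #|choices|%:R <= (#|F|%:R : RR) ^+ (l * n) * #|F|%:R ^+ (m * k).
  have card_lists : #|input_lists| = ('C(#|F|, l) ^ n)%N.
    rewrite -card_draws -[n in RHS]card_ord -card_ffun_on; apply: eq_card => S.
    by rewrite !inE; apply/forallP/ffun_onP => S_l i; have := S_l i; rewrite inE.
  rewrite cardsX natrM; apply: ler_pM => //.
    rewrite card_lists natrX exprM lerXn2r ?nnegrE ?exprn_ge0 //.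
    by rewrite -natrX ler_nat bin_leq_exp.
  by rewrite -natrX ler_nat -card_mx max_card.
apply: (@le_trans _ _
  ((\sum_(p in choices) #|bad_for p|)%N%:R * #|F|%:R ^+ (m * n))).
  apply: ler_wpM2r; first by rewrite exprn_ge0.
  by rewrite ler_nat (leq_trans (subset_leq_card bad_sub)) ?leq_card_bigcup.
rewrite natr_sum mulr_suml; apply: le_trans (ler_sum _ card_bad_for) _.
rewrite sumr_const -[X in X <= _]mulr_natl -[leRHS]mulrA.
by apply: ler_wpM2r; rewrite // mulr_ge0 ?exprn_ge0.
Qed.

End BadCodes.

Lemma union_exponent_le (RR : realType) (R eps a b c l m : RR) :
  0 < eps -> 0 <= c -> 0 <= m -> (8 * R / eps + 6) * b <= c ->
  b + 4 / eps * a <= c -> 2 * l <= m * eps ->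
  l * c + m * (a + (R + eps) * b - eps * c) <= - (l * c / 4).
Proof.
move=> eps_gt0 c_ge0 m_ge0 hb ha hm.
have hb' : 8 * R * b + 6 * eps * b <= eps * c.
  have -> : 8 * R * b + 6 * eps * b = eps * ((8 * R / eps + 6) * b) by field; lra.
  by rewrite ler_pM2l.
have ha' : eps * b + 4 * a <= eps * c.
  have -> : eps * b + 4 * a = eps * (b + 4 / eps * a) by field; lra.
  by rewrite ler_pM2l.
(* 8 (a + (R + eps) b) = 2 (4 a + eps b) + (8 R b + 6 eps b) <= 3 eps c *)
have mD : m * (a + (R + eps) * b - eps * c) <= m * (- (5 / 8) * eps * c).
  by apply: ler_wpM2l => //; lra.
have lc : 2 * l * c <= m * eps * c by apply: ler_wpM2r.
lra.
Qed.

Lemma union_bound_le (RR : realType) (n k l m : nat) (R eps Q : RR) :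
  0 < eps -> (0 < l)%N -> (l%:R : RR) `^ (8 * R / eps + 6) <= Q ->
  l%:R * 2 `^ (4 / eps) <= Q -> k%:R = R * n%:R -> 2 * l%:R / eps <= m%:R ->
  Q ^+ (l * n) * Q ^+ (m * k)
      * (2 ^+ n * ((l%:R / Q) `^ ((R + eps) * n%:R) * Q ^+ n)) ^+ m
    <= Q `^ (- (eps * n%:R * (2 * l%:R / eps) / 8)) * Q ^+ (m * n).
Proof.
move=> eps_gt0 l_gt0 Q_ge1 Q_ge2 k_eq m_ge.
have l_pos : (0 : RR) < l%:R by rewrite ltr0n.
have Q_gt0 : 0 < Q by apply: lt_le_trans Q_ge2; rewrite mulr_gt0 ?powR_gt0.
have B_gt0 : 0 < 2 ^+ n * ((l%:R / Q) `^ ((R + eps) * n%:R) * Q ^+ n).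
  by rewrite !mulr_gt0 ?exprn_gt0 ?powR_gt0 ?divr_gt0 ?ltr0n.
have hb : (8 * R / eps + 6) * ln (l%:R : RR) <= ln Q.
  by rewrite -ln_powR ler_ln ?posrE ?powR_gt0.
have ha : ln (l%:R : RR) + 4 / eps * ln 2 <= ln Q.
  by rewrite -ln_powR -lnM ?posrE ?powR_gt0 // ler_ln ?posrE ?mulr_gt0 ?powR_gt0.
have c_ge0 : 0 <= ln Q.
  apply: le_trans ha; rewrite addr_ge0 ?ln_ge0 ?ler1n //.
  by rewrite mulr_ge0 ?ln_ge0 ?divr_ge0 ?ler1n ?ltW.
have hm : 2 * l%:R <= m%:R * eps by rewrite -ler_pdivrMr.
have := ler_wpM2l (ler0n _ n) (union_exponent_le eps_gt0 c_ge0 (ler0n _ m) hb ha hm).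
rewrite -ler_ln ?posrE ?mulr_gt0 ?exprn_gt0 ?powR_gt0 //.
rewrite !lnM ?posrE ?mulr_gt0 ?exprn_gt0 ?powR_gt0 ?divr_gt0 //.
rewrite !lnXn ?mulr_gt0 ?exprn_gt0 ?powR_gt0 ?divr_gt0 //.
rewrite !lnM ?posrE ?mulr_gt0 ?exprn_gt0 ?powR_gt0 ?divr_gt0 //.
rewrite !ln_powR !lnXn ?ln_div ?posrE // -[ln Q *+ (m * k)]mulr_natr natrM k_eq.
have -> : eps * n%:R * (2 * l%:R / eps) / 8 = n%:R * l%:R / 4.
  by field; rewrite lt0r_neq0.
move: (ln Q) (ln 2) (ln l%:R) => c a b scaled.
rewrite [leLHS](_ : _ = n%:R * (l%:R * c + m%:R * (a + (R + eps) * b - eps * c))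
                        + c *+ (m * n)); last by ring.
rewrite [leRHS](_ : _ = n%:R * - (l%:R * c / 4) + c *+ (m * n)); last by ring.
by rewrite lerD2r.
Qed.

Lemma least_nat_ge (RR : realType) (x : RR) : 0 <= x ->
  exists m : nat, x <= m%:R /\ forall t : nat, x <= t%:R -> (m <= t)%N.
Proof.
move=> x_ge0; have ceil_ge0 : (0 <= Num.ceil x)%R.
  by rewrite ceil_ge0 // (lt_le_trans (ltrN10 _) x_ge0).
exists `|Num.ceil x|%N; split; first by rewrite natr_absz ger0_norm // ceil_ge.
by move=> t x_le_t; rewrite -lez_nat abszE ger0_norm // ceil_le_int.
Qed.

Lemma card_bad_codes_le (RR : realType) (F : finFieldType) (n k l : nat) (R eps : RR) :
  0 < eps -> (0 < l)%N ->
  Num.max ((l%:R : RR) `^ (8 * R / eps + 6)) (l%:R * (2 : RR) `^ (4 / eps))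
    <= #|F|%:R ->
  k%:R = R * n%:R ->
  #|[set G : 'M[F]_(n, k) | ~~ good_code l (1 - R - eps) (2 * l%:R / eps) G]|%:R
    <= #|F|%:R `^ (- (eps * n%:R * (2 * l%:R / eps) / 8)) * #|F|%:R ^+ (n * k).
Proof.
move=> eps_gt0 l_gt0 + k_eq; rewrite ge_max => /andP [q_ge1 q_ge2].
have l_le_q : (l <= #|F|)%N.
  rewrite -(ler_nat RR) (le_trans _ q_ge2) // ler_peMr ?ler0n //.
  rewrite -[X in X <= _](powRr0 2); apply: ler_powR; first by rewrite ler1n.
  by rewrite divr_ge0 // ltW.
have [m [L_le_m m_min]] : exists m : nat, 2 * l%:R / eps <= m%:R /\
    forall t : nat, 2 * l%:R / eps <= t%:R -> (m <= t)%N.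
  by apply/least_nat_ge/ltW; rewrite !divr_gt0 ?mulr_gt0 ?ltr0n.
pose B : RR := 2 ^+ n * ((l%:R / #|F|%:R) `^ ((R + eps) * n%:R) * #|F|%:R ^+ n).
have B_ge0 : 0 <= B by rewrite /B !mulr_ge0 ?exprn_ge0 ?powR_ge0.
have ball_le S : S \in input_lists F n l -> #|lr_ball (1 - R - eps) S|%:R <= B.
  rewrite inE => /forallP S_l.
  have := card_lr_ball_le (1 - R - eps) (fun i => eqP (S_l i)) l_gt0 l_le_q.
  by have -> : 1 - (1 - R - eps) = R + eps by ring.
rewrite -(@ler_pM2r _ (#|F|%:R ^+ (m * n))) ?exprn_gt0 ?ltr0n ?(leq_trans l_gt0) //.
apply: le_trans (card_bad_codes_union_bound k m_min B_ge0 ball_le) _.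
rewrite [leRHS]mulrAC; apply: ler_wpM2r; first by rewrite exprn_ge0.
exact: union_bound_le eps_gt0 l_gt0 q_ge1 q_ge2 k_eq L_le_m.
Qed.

Theorem lemma3p3 (RR : realType) (F : finFieldType) (n k l : nat) (R eps : RR) :
  0 < R -> R < 1 -> 0 < eps -> 0 < 1 - R - eps -> (0 < l)%N ->
  Num.max ((l%:R : RR) `^ (8 * R / eps + 6)) (l%:R * (2 : RR) `^ (4 / eps))
    <= #|F|%:R ->
  k%:R = R * n%:R ->
  let L := 2 * l%:R / eps in
  (1 - (#|F|%:R : RR) `^ (- (eps * n%:R * L / 8))) * (#|F|%:R ^+ (n * k))
    <= #|[set G : 'M[F]_(n, k) | good_code l (1 - R - eps) L G]|%:R.
Proof.
move=> _ _ eps_gt0 _ l_gt0 q_ge k_eq; rewrite [is_true _]/=.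
have := card_bad_codes_le eps_gt0 l_gt0 q_ge k_eq.
set bad := [set G | ~~ _]; set good := [set G | _] => bad_le.
have card_split : (#|good| + #|bad| = #|F| ^ (n * k))%N.
  rewrite -card_mx -(cardsC good); congr (_ + _)%N.
  by apply: eq_card => G; rewrite !inE.
rewrite -(addnK #|bad| #|good|) card_split natrB; last by rewrite -card_split leq_addl.
by rewrite natrX mulrBl mul1r lerD2l lerN2.
Qed.
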